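(* Let $X$ be a finite poset and $F$ a field with $\mathrm{char}(F)=2$ and $|F|>2$. Then every bijective $F$-linear map $\varphi:I(X,F)\to I(X,F)$ satisfying $\varphi(E(I(X,F)))\subseteq E(I(X,F))$ is a Lie automorphism of $I(X,F)$, i.e. $\varphi(ab+ba)=\varphi(a)\varphi(b)+\varphi(b)\varphi(a)$ for all $a,b\in I(X,F)$.
   Context: For a locally finite poset $X$ and a field $F$, $I(X,F)$ is the incidence algebra: functions $f:X\times X\to F$ with $f(x,y)=0$ unless $x\le y$, with convolution product $(fg)(x,y)=\sum_{x\le z\le y}f(x,z)g(z,y)$. $E(A)$ denotes the set of idempotents of a ring $A$. In characteristic $2$, a Lie automorphism of an algebra $A$ means a bijective linear map $A\to A$ preserving the product $a\circ b=ab+ba$ (which coincides with $ab-ba$). *)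

From HB Require Import structures.
From mathcomp Require Import all_boot all_order all_algebra.
Set Implicit Arguments. Unset Strict Implicit. Unset Printing Implicit Defensive.
Import Order.TTheory GRing.Theory.
Local Open Scope ring_scope.

(* Incidence algebra I(X,F) of a finite poset X over a field F, represented
   inside the space of all functions X * X -> F (finite functions). *)

Definition incid {d : Order.disp_t} {X : finPOrderType d} {F : fieldType}
  (f : {ffun X * X -> F}) : Prop :=
  forall x y : X, ~~ (x <= y)%O -> f (x, y) = 0.

Definition iconv {d : Order.disp_t} {X : finPOrderType d} {F : fieldType}
  (f g : {ffun X * X -> F}) : {ffun X * X -> F} :=
  [ffun p => \sum_(z : X | (p.1 <= z)%O && (z <= p.2)%O) f (p.1, z) * g (z, p.2)].

Definition iidem {d : Order.disp_t} {X : finPOrderType d} {F : fieldType}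
  (e : {ffun X * X -> F}) : Prop :=
  incid e /\ iconv e e = e.

Definition iscale {d : Order.disp_t} {X : finPOrderType d} {F : fieldType}
  (k : F) (f : {ffun X * X -> F}) : {ffun X * X -> F} :=
  [ffun p => k * f p].

(* Write a o b = ab + ba. If E is idempotent and E + sA + tB + stC is idempotent
   for all s, t in F, comparing coefficients (F contains some c other than 0 and 1)
   gives E o A = A and E o C + A o B = C, among other identities. Since phi is linear
   and preserves idempotents, the images satisfy the same identities; hence phi
   preserves the product E o A, and it preserves A o B once it preserves E o C.
   Choosing for E sums of diagonal matrix units and for A, B, C matrix units shows
   that phi preserves the product of any two matrix units, and bilinearity does the
   rest. *)

From mathcomp Require Import all_boot all_order all_algebra.
From mathcomp Require Import ring.
Import Order.TTheory GRing.Theory.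
Local Open Scope ring_scope.
Set Implicit Arguments. Unset Strict Implicit. Unset Printing Implicit Defensive.

Lemma sum_if_eq (R : nmodType) (I : finType) (S : {set I}) (a : I) (f : R) :
  \sum_(w in S) (if w == a then f else 0) = if a \in S then f else 0.
Proof.
have [aS|naS] := boolP (a \in S).
  by rewrite (bigD1 a) //= eqxx big1 ?addr0 // => w /andP[_ /negPf->].
by rewrite big1 // => w wS; case: eqP wS => // ->; rewrite (negPf naS).
Qed.

Lemma quadratic_eq0 (R : idomainType) (c a b e : R) : c != 0 -> c != 1 ->
  (forall s, a + s * b + s ^+ 2 * e = 0) -> [/\ a = 0, b = 0 & e = 0].
Proof.
move=> c0 c1 h; have a0 : a = 0 by have := h 0; rewrite expr2 !mul0r !addr0.
have e0 : e = 0.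
  have : c * (c - 1) * e = (a + c * b + c ^+ 2 * e) - c * (a + 1 * b + 1 ^+ 2 * e).
    by rewrite a0; ring.
  by rewrite !h mulr0 subrr => /eqP; rewrite !mulf_eq0 subr_eq0 (negPf c0) (negPf c1) => /eqP.
by split=> //; have := h 1; rewrite a0 e0 add0r mul1r mulr0 addr0.
Qed.

Lemma biquadratic_eq0 (R : idomainType) (c a0 a1 a2 b0 b1 b2 e0 e1 e2 : R) :
  c != 0 -> c != 1 ->
  (forall s t, (a0 + t * a1 + t ^+ 2 * a2) + s * (b0 + t * b1 + t ^+ 2 * b2)
               + s ^+ 2 * (e0 + t * e1 + t ^+ 2 * e2) = 0) ->
  [/\ [/\ a0 = 0, a1 = 0 & a2 = 0], [/\ b0 = 0, b1 = 0 & b2 = 0]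
    & [/\ e0 = 0, e1 = 0 & e2 = 0]].
Proof.
move=> c0 c1 h; have coef t := quadratic_eq0 c0 c1 (h^~ t).
split; apply: (quadratic_eq0 c0 c1) => t; by case: (coef t).
Qed.

Section IncidenceAlgebra.
Context {d : Order.disp_t} {X : finPOrderType d} {F : fieldType}.
Local Notation V := {ffun X * X -> F}.

Lemma iconvDl (a b c : V) : iconv (a + b) c = iconv a c + iconv b c.
Proof.
by apply/ffunP=> p; rewrite !ffunE -big_split; apply: eq_bigr=> z _; rewrite !ffunE mulrDl.
Qed.

Lemma iconvDr (a b c : V) : iconv c (a + b) = iconv c a + iconv c b.
Proof.
by apply/ffunP=> p; rewrite !ffunE -big_split; apply: eq_bigr=> z _; rewrite !ffunE mulrDr.
Qed.

Lemma iconvZl k (a c : V) : iconv (iscale k a) c = iscale k (iconv a c).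
Proof.
by apply/ffunP=> p; rewrite !ffunE big_distrr; apply: eq_bigr=> z _; rewrite !ffunE /= mulrA.
Qed.

Lemma iconvZr k (a c : V) : iconv c (iscale k a) = iscale k (iconv c a).
Proof.
by apply/ffunP=> p; rewrite !ffunE big_distrr; apply: eq_bigr=> z _; rewrite !ffunE /= mulrCA.
Qed.

Lemma iconv0l (a : V) : iconv 0 a = 0.
Proof. by apply/ffunP=> p; rewrite !ffunE big1 // => z _; rewrite ffunE mul0r. Qed.

Lemma iconv0r (a : V) : iconv a 0 = 0.
Proof. by apply/ffunP=> p; rewrite !ffunE big1 // => z _; rewrite ffunE mulr0. Qed.

Lemma iscaleN1 (a : V) : iscale (-1) a = - a.
Proof. by apply/ffunP=> p; rewrite !ffunE mulN1r. Qed.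

Lemma iscale1 (a : V) : iscale 1 a = a.
Proof. by apply/ffunP=> p; rewrite ffunE mul1r. Qed.

Lemma iscale0 (a : V) : iscale 0 a = 0.
Proof. by apply/ffunP=> p; rewrite !ffunE mul0r. Qed.

Definition jor (a b : V) : V := iconv a b + iconv b a.

Lemma jorC (a b : V) : jor a b = jor b a.
Proof. exact: addrC. Qed.

Lemma jor0l (a : V) : jor 0 a = 0.
Proof. by rewrite /jor iconv0l iconv0r addr0. Qed.

Lemma jorDl (a b c : V) : jor (a + b) c = jor a c + jor b c.
Proof. by rewrite /jor iconvDl iconvDr addrACA. Qed.

Lemma jorZl k (a c : V) : jor (iscale k a) c = iscale k (jor a c).
Proof. by apply/ffunP=> p; rewrite /jor iconvZl iconvZr !ffunE mulrDr. Qed.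

Lemma jor0r (a : V) : jor a 0 = 0.
Proof. by rewrite jorC jor0l. Qed.

Lemma jor_idem (e : V) : iconv e e = e -> jor e e = e + e.
Proof. by rewrite /jor => ->. Qed.

Lemma jor_idem_eq0 (e f : V) : iconv e e = e -> iconv f f = f ->
  iconv (e + f) (e + f) = e + f -> jor e f = 0.
Proof.
move=> ee ff; rewrite /jor iconvDl !iconvDr ee ff.
move: (iconv e f) (iconv f e) => ef fe /ffunP efef; apply/ffunP=> p.
have := efef p; rewrite !ffunE => h.
by rewrite -(subrr (e p + f p)) -{1}h; ring.
Qed.

Lemma incid0 : incid (0 : V).
Proof. by move=> x y _; rewrite ffunE. Qed.

Lemma incidD (a b : V) : incid a -> incid b -> incid (a + b).
Proof. by move=> ha hb x y n; rewrite ffunE ha ?hb ?addr0. Qed.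

Lemma incidZ k (a : V) : incid a -> incid (iscale k a).
Proof. by move=> ha x y n; rewrite ffunE ha ?mulr0. Qed.

Lemma incidN (a : V) : incid a -> incid (- a).
Proof. by move=> ha; rewrite -iscaleN1; apply: incidZ. Qed.

Lemma incid_sum (I : finType) (P : pred I) (f : I -> V) :
  (forall i, P i -> incid (f i)) -> incid (\sum_(i | P i) f i).
Proof. by move=> hf; apply: big_ind => //; [exact: incid0 | exact: incidD]. Qed.

Lemma incid_iconv (a b : V) : incid a -> incid b -> incid (iconv a b).
Proof.
move=> ha hb x y nxy; rewrite ffunE big1 // => z /andP[xz zy].
by move: nxy; rewrite (le_trans xz zy).
Qed.

Lemma incid_jor (a b : V) : incid a -> incid b -> incid (jor a b).
Proof. by move=> ha hb; apply: incidD; apply: incid_iconv. Qed.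

Definition idelta (x y : X) : V := [ffun p => if p == (x, y) then 1 else 0].

Lemma incid_idelta (x y : X) : (x <= y)%O -> incid (idelta x y).
Proof.
by move=> xy a b nab; rewrite ffunE; case: eqP => // -[-> ->] in nab *; rewrite xy in nab.
Qed.

Lemma iconv_idelta (x y u v : X) : (x <= y)%O -> (u <= v)%O ->
  iconv (idelta x y) (idelta u v) = if y == u then idelta x v else 0.
Proof.
move=> xy uv; apply/ffunP=> -[a b]; rewrite /idelta !ffunE /=.
have [eyu|yu] := eqVneq y u; last first.
  rewrite ffunE big1 // => z _; rewrite !ffunE !xpair_eqE.
  by case: (z =P y) => [->|_]; rewrite ?(negPf yu) ?andbF ?mulr0 ?mul0r.
rewrite -{}eyu in uv *; rewrite ffunE xpair_eqE.
have [/andP[/eqP-> /eqP->]|nab] := boolP ((a == x) && (b == v)).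
  rewrite (bigD1 y) ?xy ?uv //= !ffunE !eqxx mul1r big1 ?addr0 // => z /andP[_ zy].
  by rewrite !ffunE xpair_eqE (negPf zy) andbF mul0r.
rewrite big1 // => z _; rewrite !ffunE !xpair_eqE.
by move: nab; case: (a == x); case: (b == v); case: (z == y); rewrite ?mulr0 ?mul0r.
Qed.

Definition idiag (S : {set X}) : V := \sum_(w in S) idelta w w.

Lemma incid_idiag S : incid (idiag S).
Proof. by apply: incid_sum => w _; apply: incid_idelta. Qed.

Lemma idiag1 (z : X) : idiag [set z] = idelta z z.
Proof. exact: big_set1. Qed.

Lemma idiag2 (z u : X) : z != u -> idiag [set z; u] = idelta z z + idelta u u.
Proof. by move=> zu; rewrite /idiag big_setU1 ?inE // big_set1. Qed.

Lemma iconv_idiag_l S (a b : X) : (a <= b)%O ->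
  iconv (idiag S) (idelta a b) = if a \in S then idelta a b else 0.
Proof.
move=> ab; rewrite /idiag (big_morph (iconv^~ _) (fun f g => iconvDl f g _) (iconv0l _)).
rewrite -sum_if_eq; apply: eq_bigr => w _.
by rewrite iconv_idelta ?lexx //; case: eqP => // ->.
Qed.

Lemma iconv_idiag_r S (a b : X) : (a <= b)%O ->
  iconv (idelta a b) (idiag S) = if b \in S then idelta a b else 0.
Proof.
move=> ab; rewrite /idiag (big_morph (iconv _) (fun f g => iconvDr f g _) (iconv0r _)).
rewrite -sum_if_eq; apply: eq_bigr => w _.
by rewrite iconv_idelta ?lexx // eq_sym; case: eqP => // ->.
Qed.

Lemma iconv_idiagK S : iconv (idiag S) (idiag S) = idiag S.
Proof.
rewrite {2}/idiag (big_morph (iconv _) (fun f g => iconvDr f g _) (iconv0r _)).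
by apply: eq_bigr => w wS; rewrite iconv_idiag_l ?wS.
Qed.

Lemma iidem_idiag S : iidem (idiag S).
Proof. by split; [exact: incid_idiag | exact: iconv_idiagK]. Qed.

Lemma jor_idiag S (a b : X) : (a <= b)%O ->
  jor (idiag S) (idelta a b) = iscale ((a \in S) + (b \in S))%:R (idelta a b).
Proof.
move=> ab; rewrite /jor iconv_idiag_l // iconv_idiag_r //.
apply/ffunP=> p; case: (a \in S); case: (b \in S);
  by rewrite !ffunE ?mulr1n ?mul1r ?mul0r ?addr0 ?add0r // mulrDl mul1r.
Qed.

Lemma jor_idelta (x y u v : X) : (x <= y)%O -> (u <= v)%O ->
  jor (idelta x y) (idelta u v) =
  (if y == u then idelta x v else 0) + (if v == x then idelta u y else 0).
Proof. by move=> xy uv; rewrite /jor !iconv_idelta. Qed.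

Lemma iconv_idelta_lt (x y : X) : (x < y)%O -> iconv (idelta x y) (idelta x y) = 0.
Proof. by rewrite lt_def => /andP[yx xy]; rewrite iconv_idelta // (negPf yx). Qed.

Lemma incid_decomp (a : V) : incid a ->
  a = \sum_(p | (p.1 <= p.2)%O) iscale (a p) (idelta p.1 p.2).
Proof.
move=> ha; apply/ffunP=> q; rewrite sum_ffun ffunE.
under eq_bigr => p _ do rewrite !ffunE -surjective_pairing.
have [hq|nq] := boolP (q.1 <= q.2)%O.
  rewrite (bigD1 q) //= eqxx mulr1 big1 ?addr0 // => p /andP[_ pq].
  by rewrite eq_sym (negPf pq) mulr0.
rewrite big1; first by case: q nq => x y /= /ha.
by move=> p hp; case: eqP nq => [->|_ _]; [rewrite hp | rewrite mulr0].
Qed.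

End IncidenceAlgebra.

Section Pencil.
Context {d : Order.disp_t} {X : finPOrderType d} {F : fieldType}.
Local Notation V := {ffun X * X -> F}.
Variables E A B C : V.

Definition pencil (s t : F) : V := E + iscale s A + iscale t B + iscale (s * t) C.

(* Row i collects the coefficients of s^i t^j, j = 0, 1, 2, in the square of
   [pencil s t] minus [pencil s t]. *)
Definition idempotent_pencil : Prop :=
  [/\ [/\ iconv E E = E, jor E B = B & iconv B B = 0],
      [/\ jor E A = A, jor E C + jor A B = C & jor B C = 0] &
      [/\ iconv A A = 0, jor A C = 0 & iconv C C = 0]].

Lemma pencil_sqr_sub s t p :
  (iconv (pencil s t) (pencil s t) - pencil s t) p =
    ((iconv E E - E) p + t * (jor E B - B) p + t ^+ 2 * iconv B B p)
  + s * ((jor E A - A) p + t * (jor E C + jor A B - C) p + t ^+ 2 * jor B C p)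
  + s ^+ 2 * (iconv A A p + t * jor A C p + t ^+ 2 * iconv C C p).
Proof.
rewrite /pencil /jor !iconvDl !iconvDr !iconvZl !iconvZr.
move: (iconv E E) (iconv E A) (iconv A E) (iconv E B) (iconv B E) (iconv E C) (iconv C E)
  (iconv A A) (iconv A B) (iconv B A) (iconv A C) (iconv C A) (iconv B B) (iconv B C)
  (iconv C B) (iconv C C) => ee ea ae eb be ec ce aa ab ba ac ca bb bc cb cc.
by rewrite !ffunE; ring.
Qed.

Lemma idempotent_pencilP (c : F) : c != 0 -> c != 1 ->
  (forall s t, iconv (pencil s t) (pencil s t) = pencil s t) <-> idempotent_pencil.
Proof.
move=> c0 c1; split=> [h | [[hEE hEB hBB] [hEA hECAB hBC] [hAA hAC hCC]] s t]; last first.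
  apply/eqP; rewrite -subr_eq0; apply/eqP/ffunP=> p.
  by rewrite pencil_sqr_sub hEE hEB hBB hEA hECAB hBC hAA hAC hCC !subrr !ffunE; ring.
have sqr0 s t p : (iconv (pencil s t) (pencil s t) - pencil s t) p = 0.
  by rewrite h subrr ffunE.
have coef p := biquadratic_eq0 c0 c1 (fun s t => etrans (esym (pencil_sqr_sub s t p)) (sqr0 s t p)).
have eq0 (f : V) : (forall p, f p = 0) -> f = 0 by move=> hf; apply/ffunP=> p; rewrite hf ffunE.
have eqB (f g : V) : (forall p, (f - g) p = 0) -> f = g by move=> hf; apply/subr0_eq/eq0.
by split; split; first [apply: eq0 | apply: eqB] => p; have [[? ? ?] [? ? ?] [? ? ?]] := coef p.
Qed.

End Pencil.

Section IdempotentPreserver.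
Context {d : Order.disp_t} {X : finPOrderType d} {F : fieldType}.
Local Notation V := {ffun X * X -> F}.
Variables (c : F) (c0 : c != 0) (c1 : c != 1).
Variable phi : V -> V.
Hypothesis phi_lin : forall (k : F) (a b : V), incid a -> incid b ->
  phi (iscale k a + b) = iscale k (phi a) + phi b.
Hypothesis phi_idem : forall e, iidem e -> iidem (phi e).

Lemma phiD (a b : V) : incid a -> incid b -> phi (a + b) = phi a + phi b.
Proof. by move=> ha hb; have := phi_lin 1 ha hb; rewrite !iscale1. Qed.

Lemma phi0 : phi 0 = 0.
Proof. by apply: (addrI (phi 0)); rewrite -phiD ?addr0 //; exact: incid0. Qed.

Lemma phiZ k (a : V) : incid a -> phi (iscale k a) = iscale k (phi a).
Proof. by move=> ha; have := phi_lin k ha incid0; rewrite !addr0 phi0 addr0. Qed.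

Lemma phiN (a : V) : incid a -> phi (- a) = - phi a.
Proof. by move=> ha; rewrite -!iscaleN1 phiZ. Qed.

Lemma phi_pencil (E A B C : V) s t : incid E -> incid A -> incid B -> incid C ->
  phi (pencil E A B C s t) = pencil (phi E) (phi A) (phi B) (phi C) s t.
Proof.
by move=> hE hA hB hC; rewrite /pencil !phiD ?phiZ //; repeat apply: incidD; try apply: incidZ.
Qed.

Definition jor_hom (a b : V) : Prop := phi (jor a b) = jor (phi a) (phi b).

Lemma jor_homC (a b : V) : jor_hom a b -> jor_hom b a.
Proof. by rewrite /jor_hom jorC => ->; rewrite jorC. Qed.

Lemma jor_hom0r (a : V) : jor_hom a 0.
Proof. by rewrite /jor_hom phi0 !jor0r phi0. Qed.

Lemma jor_homDl (a a' b : V) : incid a -> incid a' -> incid b ->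
  jor_hom a b -> jor_hom a' b -> jor_hom (a + a') b.
Proof.
move=> ha ha' hb h h'; rewrite /jor_hom jorDl phiD; try exact: incid_jor.
by rewrite h h' phiD // jorDl.
Qed.

Lemma jor_homZl k (a b : V) : incid a -> incid b -> jor_hom a b -> jor_hom (iscale k a) b.
Proof. by move=> ha hb h; rewrite /jor_hom jorZl !phiZ ?h ?jorZl //; exact: incid_jor. Qed.

Lemma jor_homNl (a b : V) : incid a -> incid b -> jor_hom a b -> jor_hom (- a) b.
Proof. by rewrite -iscaleN1; exact: jor_homZl. Qed.

Lemma jor_hom_idem (e : V) : iidem e -> jor_hom e e.
Proof.
move=> ie; have [he ee] := ie; have [hpe pee] := phi_idem ie.
by rewrite /jor_hom !jor_idem // phiD.
Qed.

Lemma jor_hom_idemD (e f : V) : iidem e -> iidem f -> iidem (e + f) -> jor_hom e f.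
Proof.
move=> ie i_f ief; have [he ee] := ie; have [hf ff] := i_f; have [_ efef] := ief.
have [_ pee] := phi_idem ie; have [_ pff] := phi_idem i_f; have [_ pefef] := phi_idem ief.
by rewrite phiD // in pefef; rewrite /jor_hom !jor_idem_eq0 // phi0.
Qed.

Lemma jor_hom_pencil (E A B C : V) : incid E -> incid A -> incid B -> incid C ->
  idempotent_pencil E A B C -> jor_hom E A /\ (jor_hom E C -> jor_hom A B).
Proof.
move=> hE hA hB hC idP.
have phiP : idempotent_pencil (phi E) (phi A) (phi B) (phi C).
  apply/(idempotent_pencilP _ _ _ _ c0 c1) => s t; rewrite -phi_pencil //.
  suff /phi_idem[] : iidem (pencil E A B C s t) by [].
  split; last by move: s t; apply/(idempotent_pencilP _ _ _ _ c0 c1).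
  by rewrite /pencil; repeat apply: incidD; try apply: incidZ.
have [_ [hEA hECAB _] _] := idP; have [_ [pEA pECAB _] _] := phiP.
split=> [|hEC]; first by rewrite /jor_hom hEA pEA.
have AB (E' A' B' C' : V) : jor E' C' + jor A' B' = C' -> jor A' B' = C' - jor E' C'.
  by move=> h; rewrite -{1}h addrC addKr.
have hEC' := incid_jor hE hC; have hNEC := incidN hEC'; rewrite /jor_hom in hEC *.
by rewrite (AB _ _ _ _ hECAB) phiD ?phiN // hEC (AB _ _ _ _ pECAB).
Qed.

Lemma jor_hom_idiag_idelta (S : {set X}) (u v : X) : (u < v)%O -> (u \in S) != (v \in S) ->
  jor_hom (idiag S) (idelta u v).
Proof.
move=> uv Suv; have uv' := ltW uv.
have [] // := jor_hom_pencil (incid_idiag S) (incid_idelta uv') incid0 incid0.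
split; split; rewrite ?iconv_idiagK ?jor0l ?jor0r ?iconv0l ?iconv_idelta_lt ?addr0 //.
by rewrite jor_idiag //; case: (u \in S) (v \in S) Suv => -[] //= _; rewrite iscale1.
Qed.

Lemma jor_hom_idelta_diag (z u v : X) : (u < v)%O -> jor_hom (idelta z z) (idelta u v).
Proof.
move=> uv; have vuF : (v == u) = false by rewrite eq_sym (lt_eqF uv).
have hJ (S : {set X}) : (u \in S) != (v \in S) -> jor_hom (idiag S) (idelta u v).
  exact: jor_hom_idiag_idelta.
have [zuv|zuv] := boolP ((z == u) || (z == v)).
  rewrite -idiag1; apply: hJ; rewrite !inE.
  by case/orP: zuv => /eqP->; rewrite eqxx ?vuF ?(lt_eqF uv).
have [zu zv] : z != u /\ z != v by apply/andP; rewrite -negb_or.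
(* Both diagonal idempotents below contain exactly one endpoint of (u, v). *)
have -> : idelta z z = idiag [set z; u] - idiag [set u] :> V by rewrite idiag2 // idiag1 addrK.
have huv := incid_idelta (ltW uv).
apply: jor_homDl => //; [exact: incid_idiag | exact/incidN/incid_idiag | |].
  by apply: hJ; rewrite !inE eqxx orbT [v == z]eq_sym (negPf zv) vuF.
by apply: jor_homNl => //; [exact: incid_idiag | apply: hJ; rewrite !inE eqxx vuF].
Qed.

Lemma jor_hom_idelta_chain (x y v : X) : (x < y)%O -> (y < v)%O ->
  jor_hom (idelta x y) (idelta y v).
Proof.
move=> xy yv; have xv := lt_trans xy yv.
move: (lt_eqF xy) (lt_eqF yv) (lt_eqF xv) (gt_eqF xy) (gt_eqF yv) (gt_eqF xv).
move=> xyF yvF xvF yxF vyF vxF.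
have P : idempotent_pencil (idiag [set y] : V) (idelta x y) (idelta y v) (idelta x v).
  split; split; rewrite ?iconv_idiagK ?jor_idiag ?jor_idelta ?iconv_idelta_lt ?ltW // ?inE;
  by rewrite ?eqxx ?xyF ?yvF ?xvF ?yxF ?vyF ?vxF /= ?mulr1n ?mulr0n ?iscale1 ?iscale0 ?addr0 ?add0r.
apply: (proj2 (jor_hom_pencil (incid_idiag _) (incid_idelta (ltW xy))
  (incid_idelta (ltW yv)) (incid_idelta (ltW xv)) P)).
by rewrite idiag1; exact: jor_hom_idelta_diag.
Qed.

Lemma jor_hom_idelta_unlinked (x y u v : X) : (x < y)%O -> (u < v)%O ->
  y != u -> v != x -> jor_hom (idelta x y) (idelta u v).
Proof.
move=> xy uv /negPf yuF /negPf vxF; move: (gt_eqF xy) (gt_eqF uv) => yxF vuF.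
(* Each unit has exactly one endpoint in {x, u}, so the idempotent acts on both as
   the identity for o. *)
have P : idempotent_pencil (idiag [set x; u] : V) (idelta x y) (idelta u v) 0.
  split; split; rewrite ?iconv_idiagK ?jor_idiag ?jor_idelta ?iconv_idelta_lt ?jor0l ?jor0r
    ?iconv0l ?ltW // ?inE;
  by rewrite ?eqxx ?yuF ?vxF ?yxF ?vuF ?orbT /= ?mulr1n ?iscale1 ?addr0.
apply: (proj2 (jor_hom_pencil (incid_idiag _) (incid_idelta (ltW xy))
  (incid_idelta (ltW uv)) incid0 P)).
exact: jor_hom0r.
Qed.

Lemma jor_hom_idelta (x y u v : X) : (x <= y)%O -> (u <= v)%O ->
  jor_hom (idelta x y) (idelta u v).
Proof.
rewrite !le_eqVlt => /predU1P[<-|xy] /predU1P[<-|uv].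
- rewrite -!idiag1; have [<-|xu] := eqVneq x u; first exact/jor_hom_idem/iidem_idiag.
  by apply: jor_hom_idemD; rewrite ?idiag1 -?idiag2 -?idiag1 //; exact: iidem_idiag.
- exact: jor_hom_idelta_diag.
- by apply: jor_homC; exact: jor_hom_idelta_diag.
have [yu|yu] := eqVneq y u; first by rewrite yu in xy *; exact: jor_hom_idelta_chain.
have [vx|vx] := eqVneq v x; first by rewrite vx in uv *; apply/jor_homC/jor_hom_idelta_chain.
exact: jor_hom_idelta_unlinked.
Qed.

Lemma jor_hom_span (b : V) : incid b ->
  (forall x y : X, (x <= y)%O -> jor_hom (idelta x y) b) -> forall a, incid a -> jor_hom a b.
Proof.
move=> hb hJ a /incid_decomp->.
suff [] : incid (\sum_(p | (p.1 <= p.2)%O) iscale (a p) (idelta p.1 p.2)) /\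
          jor_hom (\sum_(p | (p.1 <= p.2)%O) iscale (a p) (idelta p.1 p.2)) b by [].
apply: (big_ind (fun w => incid w /\ jor_hom w b)).
- by split; [exact: incid0 | exact/jor_homC/jor_hom0r].
- by move=> w w' [hw Jw] [hw' Jw']; split; [exact: incidD | exact: jor_homDl].
- move=> p hp; have hd := incid_idelta hp.
  by split; [exact: incidZ | exact: jor_homZl (hJ _ _ hp)].
Qed.

Lemma jor_hom_incid (a b : V) : incid a -> incid b -> jor_hom a b.
Proof.
move=> ha hb; apply: (jor_hom_span hb) => // x y xy.
apply/jor_homC/(jor_hom_span (incid_idelta xy)) => // u v uv.
exact/jor_homC/jor_hom_idelta.
Qed.

End IdempotentPreserver.

Theorem corollary3p2 (d : Order.disp_t) (X : finPOrderType d) (F : fieldType)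
  (charF2 : 2%N \in [pchar F])
  (Fbig : exists c : F, c != 0 /\ c != 1)
  (phi : {ffun X * X -> F} -> {ffun X * X -> F})
  (phi_maps : forall a, incid a -> incid (phi a))
  (phi_lin : forall (k : F) (a b : {ffun X * X -> F}), incid a -> incid b ->
               phi (iscale k a + b) = iscale k (phi a) + phi b)
  (phi_inj : forall a b, incid a -> incid b -> phi a = phi b -> a = b)
  (phi_surj : forall b, incid b -> exists2 a, incid a & phi a = b)
  (phi_idem : forall e, iidem e -> iidem (phi e)) :
  forall a b, incid a -> incid b ->
    phi (iconv a b + iconv b a) = iconv (phi a) (phi b) + iconv (phi b) (phi a).
Proof.
have [c [c0 c1]] := Fbig.
exact: (jor_hom_incid c0 c1 phi_lin phi_idem).
Qed.
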